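(* Let $\mathsf{V}$ be a semilinear variety of pointed residuated lattices. Then for every finite set of variables $\overline{x}$ and every finite set $\Gamma\cup\{s,t\}$ of $\mathcal{L}_\rhd$-terms in the variables $\overline{x}$, \[\Gamma\cup\{s\}\models_{\mathsf{V}_\rhd}t\iff\Gamma\models_{\mathsf{V}_\rhd}s\rhd t.\]
   Context: $\mathcal{L}=\{\wedge,\vee,\cdot,\backslash,/,\mathrm{e},0\}$ and $\mathcal{L}_\rhd=\mathcal{L}\cup\{\rhd\}$ with $\rhd$ binary. A pointed residuated lattice is an $\mathcal{L}$-algebra with $\langle A,\wedge,\vee\rangle$ a lattice (order $\le$), $\langle A,\cdot,\mathrm{e}\rangle$ a monoid, $0$ a constant, and $b\le a\backslash c\iff a\cdot b\le c\iff a\le c/b$. For a variety $\mathsf{V}$ of pointed residuated lattices, $\mathsf{V}^c$ is the class of its linearly ordered members; $\mathsf{V}$ is semilinear if it consists of the isomorphic copies of subalgebras of products of members of $\mathsf{V}^c$. $\mathsf{V}_\rhd$ is the variety of $\mathcal{L}_\rhd$-algebras generated by the members of $\mathsf{V}^c$ expanded with $x\rhd y:=y$ if $\mathrm{e}\le x$ and $x\rhd y:=\mathrm{e}$ otherwise. For a class $\mathsf{K}$ and a finite set of terms $\Gamma\cup\{t\}$, $\Gamma\models_{\mathsf{K}}t$ means every member of $\mathsf{K}$ satisfies $\bigwedge\{\mathrm{e}\le u:u\in\Gamma\}\to\mathrm{e}\le t$ under every assignment ($a\le b$ abbreviates $a\wedge b\approx a$). *)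

From Stdlib Require Import List.
Import ListNotations.

Record Lalg := {
  car :> Type;
  meet : car -> car -> car;
  join : car -> car -> car;
  mul  : car -> car -> car;
  ldiv : car -> car -> car;
  rdiv : car -> car -> car;
  unit : car;
  zero : car
}.

Record LTalg := {
  base :> Lalg;
  tri : base -> base -> base
}.

Definition le (A : Lalg) (a b : A) : Prop := meet A a b = a.

Definition is_prl (A : Lalg) : Prop :=
  (forall x y z : A, meet A x (meet A y z) = meet A (meet A x y) z) /\
  (forall x y z : A, join A x (join A y z) = join A (join A x y) z) /\
  (forall x y : A, meet A x y = meet A y x) /\
  (forall x y : A, join A x y = join A y x) /\
  (forall x y : A, meet A x (join A x y) = x) /\
  (forall x y : A, join A x (meet A x y) = x) /\
  (forall x y z : A, mul A x (mul A y z) = mul A (mul A x y) z) /\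
  (forall x : A, mul A (unit A) x = x) /\
  (forall x : A, mul A x (unit A) = x) /\
  (forall a b c : A, le A b (ldiv A a c) <-> le A (mul A a b) c) /\
  (forall a b c : A, le A (mul A a b) c <-> le A a (rdiv A c b)).

Definition is_chain (A : Lalg) : Prop := forall a b : A, le A a b \/ le A b a.

Inductive lterm :=
| LVar  : nat -> lterm
| LMeet : lterm -> lterm -> lterm
| LJoin : lterm -> lterm -> lterm
| LMul  : lterm -> lterm -> lterm
| LLdiv : lterm -> lterm -> lterm
| LRdiv : lterm -> lterm -> lterm
| LUnit : lterm
| LZero : lterm.

Inductive tterm :=
| TVar  : nat -> tterm
| TMeet : tterm -> tterm -> tterm
| TJoin : tterm -> tterm -> tterm
| TMul  : tterm -> tterm -> tterm
| TLdiv : tterm -> tterm -> tterm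
| TRdiv : tterm -> tterm -> tterm
| TUnit : tterm
| TZero : tterm
| TTri  : tterm -> tterm -> tterm.

Fixpoint leval (A : Lalg) (v : nat -> A) (t : lterm) : A :=
  match t with
  | LVar n => v n
  | LMeet a b => meet A (leval A v a) (leval A v b)
  | LJoin a b => join A (leval A v a) (leval A v b)
  | LMul a b => mul A (leval A v a) (leval A v b)
  | LLdiv a b => ldiv A (leval A v a) (leval A v b)
  | LRdiv a b => rdiv A (leval A v a) (leval A v b)
  | LUnit => unit A
  | LZero => zero A
  end.

Fixpoint teval (A : LTalg) (v : nat -> A) (t : tterm) : A :=
  match t with
  | TVar n => v n
  | TMeet a b => meet A (teval A v a) (teval A v b)
  | TJoin a b => join A (teval A v a) (teval A v b)
  | TMul a b => mul A (teval A v a) (teval A v b)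
  | TLdiv a b => ldiv A (teval A v a) (teval A v b)
  | TRdiv a b => rdiv A (teval A v a) (teval A v b)
  | TUnit => unit A
  | TZero => zero A
  | TTri a b => tri A (teval A v a) (teval A v b)
  end.

(** A variety V of pointed residuated lattices, presented (Birkhoff) by a set
    E of L-equations: its members are the pointed residuated lattices
    satisfying every equation of E. *)
Definition inV (E : lterm -> lterm -> Prop) (A : Lalg) : Prop :=
  is_prl A /\
  forall s t, E s t -> forall v : nat -> A, leval A v s = leval A v t.

Definition inVc (E : lterm -> lterm -> Prop) (A : Lalg) : Prop :=
  inV E A /\ is_chain A.

(** Semilinearity: every member of V is isomorphic to a subalgebra of a
    product of members of V^c, i.e. embeds (injective homomorphism) into
    such a product. *)
Definition semilinear (E : lterm -> lterm -> Prop) : Prop :=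
  forall A : Lalg, inV E A ->
  exists (I : Type) (B : I -> Lalg),
    (forall i, inVc E (B i)) /\
    exists f : A -> forall i, B i,
      (forall x y, f x = f y -> x = y) /\
      (forall x y i, f (meet A x y) i = meet (B i) (f x i) (f y i)) /\
      (forall x y i, f (join A x y) i = join (B i) (f x i) (f y i)) /\
      (forall x y i, f (mul A x y) i = mul (B i) (f x i) (f y i)) /\
      (forall x y i, f (ldiv A x y) i = ldiv (B i) (f x i) (f y i)) /\
      (forall x y i, f (rdiv A x y) i = rdiv (B i) (f x i) (f y i)) /\
      (forall i, f (unit A) i = unit (B i)) /\
      (forall i, f (zero A) i = zero (B i)).

Definition expanded_chain (E : lterm -> lterm -> Prop) (C : LTalg) : Prop :=
  inVc E C /\
  forall x y : C,
    (le C (unit C) x -> tri C x y = y) /\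
    (~ le C (unit C) x -> tri C x y = unit C).

(** V_|> : the variety generated by the expanded chains, i.e. the class of
    all L_|>-algebras satisfying every L_|>-equation valid in all of them. *)
Definition inVt (E : lterm -> lterm -> Prop) (A : LTalg) : Prop :=
  forall s t : tterm,
    (forall C : LTalg, expanded_chain E C ->
       forall w : nat -> C, teval C w s = teval C w t) ->
    forall v : nat -> A, teval A v s = teval A v t.

Definition entails (E : lterm -> lterm -> Prop) (Gamma : list tterm) (t : tterm)
  : Prop :=
  forall A : LTalg, inVt E A ->
  forall v : nat -> A,
    (forall u, In u Gamma -> le A (unit A) (teval A v u)) ->
    le A (unit A) (teval A v t).

(** In an expanded chain, [x |> y] lies above [e] exactly when
    [e <= x] implies [e <= y], so an entailment [Gamma, s |= t] valid in all
    expanded chains becomes the single equation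
    [e /\ (g1 |> ... |> gn |> (s |> t)) = e], which therefore holds in the
    whole variety they generate.  Conversely, the equations [x |> y = (e /\ x) |> y]
    and [e |> y = y], valid in every expanded chain, give modus ponens for [|>]
    in every member of [V_|>]. *)

From Stdlib Require Import List Classical.

Lemma prl_meet_idem (A : Lalg) : is_prl A -> forall x : A, meet A x x = x.
Proof.
  intros (_ & _ & _ & _ & meet_join_absorb & join_meet_absorb & _) x.
  rewrite <- (join_meet_absorb x x) at 2. apply meet_join_absorb.
Qed.

Section ExpandedChain.

Variables (E : lterm -> lterm -> Prop) (C : LTalg).
Hypothesis HC : expanded_chain E C.

Lemma expanded_chain_tri_ge_unit (x y : C) :
  (le C (unit C) x -> le C (unit C) y) -> le C (unit C) (tri C x y).
Proof.
  destruct HC as [[[Hprl _] _] Htri]. intros Hxy.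
  destruct (classic (le C (unit C) x)) as [Hx | Hx].
  - rewrite (proj1 (Htri x y) Hx). auto.
  - rewrite (proj2 (Htri x y) Hx). apply prl_meet_idem, Hprl.
Qed.

Lemma expanded_chain_tri_meet_unit_l (x y : C) :
  tri C x y = tri C (meet C (unit C) x) y.
Proof.
  destruct HC as [[[Hprl _] _] Htri].
  assert (Hiff : le C (unit C) x <-> le C (unit C) (meet C (unit C) x)).
  { unfold le. rewrite (proj1 Hprl), (prl_meet_idem _ Hprl). tauto. }
  destruct (classic (le C (unit C) x)) as [Hx | Hx].
  - rewrite (proj1 (Htri x y) Hx), (proj1 (Htri _ y) (proj1 Hiff Hx)). reflexivity.
  - rewrite (proj2 (Htri x y) Hx), (proj2 (Htri _ y)); [reflexivity |].
    rewrite <- Hiff. exact Hx.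
Qed.

Lemma expanded_chain_tri_unit_l (y : C) : tri C (unit C) y = y.
Proof.
  destruct HC as [[[Hprl _] _] Htri].
  apply (proj1 (Htri _ y)), prl_meet_idem, Hprl.
Qed.

Lemma expanded_chain_inVt : inVt E C.
Proof. intros s t Hst. apply Hst, HC. Qed.

End ExpandedChain.

Lemma inVt_ge_unit (E : lterm -> lterm -> Prop) (u : tterm) :
  (forall C : LTalg, expanded_chain E C ->
     forall w : nat -> C, le C (unit C) (teval C w u)) ->
  forall A : LTalg, inVt E A ->
  forall v : nat -> A, le A (unit A) (teval A v u).
Proof. intros Hu A HA. exact (HA (TMeet TUnit u) TUnit Hu). Qed.

Definition env2 {A : Type} (x y : A) : nat -> A :=
  fun n => match n with 0 => x | _ => y end.

Lemma inVt_tri_mp (E : lterm -> lterm -> Prop) (A : LTalg) (HA : inVt E A)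
  (x y : A) :
  le A (unit A) x -> le A (unit A) (tri A x y) -> le A (unit A) y.
Proof.
  intros Hx Hxy.
  assert (tri_meet_unit_l : tri A x y = tri A (meet A (unit A) x) y).
  { apply (HA (TTri (TVar 0) (TVar 1)) (TTri (TMeet TUnit (TVar 0)) (TVar 1))
           (fun C HC w => expanded_chain_tri_meet_unit_l E C HC _ _) (env2 x y)). }
  assert (tri_unit_l : tri A (unit A) y = y).
  { apply (HA (TTri TUnit (TVar 1)) (TVar 1)
           (fun C HC w => expanded_chain_tri_unit_l E C HC _) (env2 x y)). }
  unfold le in Hx. rewrite tri_meet_unit_l, Hx, tri_unit_l in Hxy. exact Hxy.
Qed.

Definition tri_fold (G : list tterm) (r : tterm) : tterm :=
  fold_right TTri r G.

Lemma expanded_chain_tri_fold_ge_unit (E : lterm -> lterm -> Prop) (C : LTalg)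
  (HC : expanded_chain E C) (w : nat -> C) (G : list tterm) (r : tterm) :
  ((forall u, In u G -> le C (unit C) (teval C w u)) ->
   le C (unit C) (teval C w r)) ->
  le C (unit C) (teval C w (tri_fold G r)).
Proof.
  induction G as [| g G IH]; simpl; intros HGr.
  - apply HGr. intros u [].
  - apply (expanded_chain_tri_ge_unit E C HC). intros Hg.
    apply IH. intros HG. apply HGr. intros u [<- | Hu]; auto.
Qed.

Lemma inVt_tri_fold_mp (E : lterm -> lterm -> Prop) (A : LTalg) (HA : inVt E A)
  (v : nat -> A) (G : list tterm) (r : tterm) :
  (forall u, In u G -> le A (unit A) (teval A v u)) ->
  le A (unit A) (teval A v (tri_fold G r)) -> le A (unit A) (teval A v r).
Proof.
  induction G as [| g G IH]; simpl; intros HG Hfold; auto.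
  apply IH; auto. apply (inVt_tri_mp E A HA (teval A v g)); auto.
Qed.

Theorem proposition7p2 (E : lterm -> lterm -> Prop) (hV : semilinear E)
  (Gamma : list tterm) (s t : tterm) :
  entails E (s :: Gamma) t <-> entails E Gamma (TTri s t).
Proof.
  split.
  - intros Hent A HA v HGamma.
    apply (inVt_tri_fold_mp E A HA v Gamma (TTri s t) HGamma).
    refine (inVt_ge_unit E _ _ A HA v). intros C HC w.
    apply (expanded_chain_tri_fold_ge_unit E C HC w). intros HGamma'.
    apply (expanded_chain_tri_ge_unit E C HC). intros Hs.
    apply (Hent C (expanded_chain_inVt E C HC) w). intros u [<- | Hu]; auto.
  - intros Hent A HA v HsGamma.
    apply (inVt_tri_mp E A HA (teval A v s)).
    + apply HsGamma. left. reflexivity.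
    + apply Hent; auto. intros u Hu. apply HsGamma. right. exact Hu.
Qed.
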